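(* Fix a sampler time $t\in(0,1]$, step size $\delta_t>0$, noise level $\sigma_t>0$, a state $x_t\in\mathbb{R}^d$ and context $c$. Let $\mu_t(v)=U_t+B_t v$ be the one-step mean as a function of a velocity $v\in\mathbb{R}^d$, where $U_t$ does not depend on $v$ and $B_t=-\delta_t-(1-t)\frac{\sigma_t^2\delta_t}{2t}$ is a scalar, and let $\Sigma_t$ be a fixed symmetric positive definite covariance. Let $v^{\mathrm{old}}\in\mathbb{R}^d$ be a fixed (rollout) velocity not depending on $\theta$, let $v_\theta=v_\theta(x_t,t,c)$ be a differentiable parametric velocity, let $\beta>0$, $\Delta v_\theta=v_\theta-v^{\mathrm{old}}$, $v^{\pm}_\theta=v^{\mathrm{old}}\pm\beta\Delta v_\theta$, $\mu^{\mathrm{old}}_t=\mu_t(v^{\mathrm{old}})$, $\mu^{\pm}_{\theta,t}=\mu_t(v^\pm_\theta)$. For an observed next state $x_{t^-}$ let $E^{\pm}_{\theta,t}=\|x_{t^-}-\mu^\pm_{\theta,t}\|^2_{\Sigma_t^{-1}}$, $e_t=x_{t^-}-\mu^{\mathrm{old}}_t$, $d_t=\mu^+_{\theta,t}-\mu^{\mathrm{old}}_t$. Let $r\in[0,1]$, $y=2r-1$, $z_t=\tfrac12 y(E^+_{\theta,t}-E^-_{\theta,t})$ and $\ell_t(\theta)=\mathrm{softplus}(z_t)$. (a) $E^+_{\theta,t}-E^-_{\theta,t}=-4\langle\Sigma_t^{-1}e_t,d_t\rangle$. (b) $-\nabla_\theta\ell_t(\theta)=2\beta\,\sigma(z_t)\,y\,\big(\tfrac{\partial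 v_\theta}{\partial\theta}\big)^\top B_t\Sigma_t^{-1}e_t$; in particular $-\nabla_\theta\ell_t(\theta)\propto\sigma(z_t)\,y\,\big(\tfrac{\partial v_\theta}{\partial\theta}\big)^\top B_t\Sigma_t^{-1}e_t$, where $\sigma$ is the logistic sigmoid. (c) Suppose now $x_{t^-}$ and $r$ are random given $(x_t,c)$, that $r=o\in\{0,1\}$ is a binary outcome with $\alpha(x_t,c)=\mathbb{P}(o=1\mid x_t,c)$, that $\mu^{\mathrm{old}}_t=\mathbb{E}[x_{t^-}\mid x_t,c]$, and define $\mu^{\pm}_t(x_t,c)=\mathbb{E}[x_{t^-}\mid x_t,c,o=1]$ resp. $\mathbb{E}[x_{t^-}\mid x_t,c,o=0]$ and $\Delta\mu^\star_t(x_t,c)=\mu^+_t-\mu^-_t$. In the small-update regime in which $\sigma(z_t)$ is treated as a constant (as when $v_\theta\approx v^{\mathrm{old}}$), the conditional expected update direction is parallel to the oracle mean gap direction: $$\mathbb{E}[-\nabla_\theta\ell_t(\theta)\mid x_t,c]\ \parallel\ \Big(\frac{\partial v_\theta}{\partial\theta}\Big)^\top B_t\Sigma_t^{-1}\Delta\mu^\star_t(x_t,c).$$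
   Context: $\|u\|^2_M=u^\top Mu$, $\langle\cdot,\cdot\rangle$ is the Euclidean inner product, $\mathrm{softplus}(z)=\log(1+e^z)$, $\sigma(z)=1/(1+e^{-z})$. Gradients with respect to $\theta$ treat $v^{\mathrm{old}}$, $\mu^{\mathrm{old}}_t$, $e_t$ and $x_{t^-}$ as constants. The affine mean arises from the Euler–Maruyama step of a flow-matching reverse SDE $x_{t^-}=x_t-\big[v+\frac{\sigma_t^2}{2t}(x_t+(1-t)v)\big]\delta_t+\sigma_t\sqrt{\delta_t}\,\epsilon$, $\epsilon\sim\mathcal{N}(0,I)$, with $t^-=t-\delta_t$; $U_t=(1-\frac{\sigma_t^2\delta_t}{2t})x_t$. ''Parallel'' means equal up to a (nonnegative) scalar factor. *)

From HB Require Import structures.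
From mathcomp Require Import all_boot all_order all_algebra.
From mathcomp Require Import all_classical all_reals all_analysis.
Set Implicit Arguments. Unset Strict Implicit. Unset Printing Implicit Defensive.
Import Order.TTheory GRing.Theory Num.Theory.
Import numFieldNormedType.Exports.
Local Open Scope classical_set_scope.
Local Open Scope ring_scope.

Section Defs.
Variable R : realType.

Definition softplus (z : R) : R := ln (1 + expR z).
Definition sigmoid (z : R) : R := (1 + expR (- z))^-1.

Definition inner {d : nat} (a b : 'cV[R]_d) : R := (a^T *m b) 0 0.
Definition sqnormM {d : nat} (M : 'M[R]_d) (u : 'cV[R]_d) : R := (u^T *m M *m u) 0 0.

Definition symmetric_pd {d : nat} (S : 'M[R]_d) : Prop :=
  S^T = S /\ forall u : 'cV[R]_d, u != 0 -> 0 < sqnormM S u.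

(* Euler-Maruyama coefficients of the flow-matching reverse SDE *)
Definition Bt (t dt sig : R) : R := - dt - (1 - t) * (sig ^+ 2 * dt / (2 * t)).
Definition Ut {d : nat} (t dt sig : R) (x : 'cV[R]_d) : 'cV[R]_d :=
  (1 - sig ^+ 2 * dt / (2 * t)) *: x.
Definition mut {d : nat} (t dt sig : R) (x v : 'cV[R]_d) : 'cV[R]_d :=
  Ut t dt sig x + Bt t dt sig *: v.

Definition vplus {d : nat} (beta : R) (vold vth : 'cV[R]_d) : 'cV[R]_d :=
  vold + beta *: (vth - vold).
Definition vminus {d : nat} (beta : R) (vold vth : 'cV[R]_d) : 'cV[R]_d :=
  vold - beta *: (vth - vold).

Definition Eplus {d : nat} (t dt sig beta : R) (Sig : 'M[R]_d)
  (x xm vold vth : 'cV[R]_d) : R :=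
  sqnormM (invmx Sig) (xm - mut t dt sig x (vplus beta vold vth)).
Definition Eminus {d : nat} (t dt sig beta : R) (Sig : 'M[R]_d)
  (x xm vold vth : 'cV[R]_d) : R :=
  sqnormM (invmx Sig) (xm - mut t dt sig x (vminus beta vold vth)).

Definition zt {d : nat} (t dt sig beta r : R) (Sig : 'M[R]_d)
  (x xm vold vth : 'cV[R]_d) : R :=
  2^-1 * (2 * r - 1) *
  (Eplus t dt sig beta Sig x xm vold vth - Eminus t dt sig beta Sig x xm vold vth).

Definition losst {d p : nat} (t dt sig beta r : R) (Sig : 'M[R]_d)
  (x xm vold : 'cV[R]_d) (v : 'cV[R]_p -> 'cV[R]_d) (th : 'cV[R]_p) : R :=
  softplus (zt t dt sig beta r Sig x xm vold (v th)).

Definition gradR {p : nat} (f : 'cV[R]_p -> R) (th : 'cV[R]_p) : 'cV[R]_p :=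
  \col_k ('D_(delta_mx k 0) f th).
Definition jacobian_col {d p : nat} (v : 'cV[R]_p -> 'cV[R]_d) (th : 'cV[R]_p)
  : 'M[R]_(d, p) :=
  \matrix_(i, k) (('D_(delta_mx k 0) v th) i 0).

Definition Evec {dT : measure_display} {T : measurableType dT} {d : nat}
  (P : probability T R) (X : T -> 'cV[R]_d) : 'cV[R]_d :=
  \col_i fine (\int[P]_w (X w i 0)%:E).
Definition Econd {dT : measure_display} {T : measurableType dT} {d : nat}
  (P : probability T R) (X : T -> 'cV[R]_d) (A : set T) : 'cV[R]_d :=
  (fine (P A))^-1 *: \col_i fine (\int[P]_(w in A) (X w i 0)%:E).

End Defs.

From HB Require Import structures.
From mathcomp Require Import all_boot all_order all_algebra.
From mathcomp Require Import all_classical all_reals all_analysis.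
From mathcomp Require Import ring.
Import Order.TTheory GRing.Theory Num.Theory.
Import numFieldNormedType.Exports.
Local Open Scope classical_set_scope.
Local Open Scope ring_scope.

(* Since x_{t^-} - mu^+ = e_t - d_t and x_{t^-} - mu^- = e_t + d_t, part (a) is the
   polarization identity of the symmetric form Sigma^-1.  It makes z_t an affine function
   of v_theta, z_t = -2 y B_t beta <Sigma^-1 e_t, v_theta - v_old>, so part (b) is the chain
   rule with softplus' = sigmoid.  For part (c), if mu_old = E[x_{t^-}] and p = P(o = 1),
   then E[(2o - 1)(x_{t^-} - mu_old)] = 2 p (1 - p) (mu^+ - mu^-), and the linear map
   (dv/dtheta)^T B_t Sigma^-1 commutes with the expectation. *)

Section inner_product.
Variables (R : realType) (d : nat).
Implicit Types (M : 'M[R]_d) (a b c : 'cV[R]_d).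

Lemma inner_sum a b : inner a b = \sum_i a i 0 * b i 0.
Proof. by rewrite /inner mxE; apply: eq_bigr => i _; rewrite mxE. Qed.

Lemma innerZr a b (k : R) : inner a (k *: b) = k * inner a b.
Proof. by rewrite /inner -scalemxAr mxE. Qed.

Lemma innerZl a b (k : R) : inner (k *: a) b = k * inner a b.
Proof. by rewrite /inner linearZ /= -scalemxAl mxE. Qed.

Lemma innerBr a b c : inner a (b - c) = inner a b - inner a c.
Proof. by rewrite /inner mulmxBr !mxE. Qed.

Lemma inner_symmetric_mulmx M a b : M^T = M -> inner (M *m a) b = (a^T *m M *m b) 0 0.
Proof. by move=> MT; rewrite /inner trmx_mul MT. Qed.

Lemma sqnormM_polarization M a b : M^T = M ->
  sqnormM M (a - b) - sqnormM M (a + b) = -4 * inner (M *m a) b.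
Proof.
move=> MT; rewrite inner_symmetric_mulmx // /sqnormM.
have sym : (b^T *m M *m a) 0 0 = (a^T *m M *m b) 0 0.
  have -> : b^T *m M *m a = (a^T *m M *m b)^T by rewrite !trmx_mul trmxK MT mulmxA.
  by rewrite mxE.
rewrite !linearD !linearN /= !(mulmxDl, mulmxDr, mulNmx, mulmxN).
move: sym; set aa := a^T *m M *m a; set ab := a^T *m M *m b.
set ba := b^T *m M *m a; set bb := b^T *m M *m b.
rewrite !mxE => ->.
ring.
Qed.
End inner_product.

Section one_step_mean.
Variables (R : realType) (d : nat) (t dt sig beta : R).
Variables (Sig : 'M[R]_d) (x xm vold : 'cV[R]_d).
Hypothesis SigT : Sig^T = Sig.

Lemma mutB (y z : 'cV[R]_d) :
  mut t dt sig x y - mut t dt sig x z = Bt t dt sig *: (y - z).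
Proof. by rewrite /mut opprD addrACA subrr add0r scalerBr. Qed.

Lemma Eplus_sub_Eminus (vth : 'cV[R]_d) :
  Eplus t dt sig beta Sig x xm vold vth - Eminus t dt sig beta Sig x xm vold vth
  = - 4 * inner (invmx Sig *m (xm - mut t dt sig x vold))
                (mut t dt sig x (vplus beta vold vth) - mut t dt sig x vold).
Proof.
have invT : (invmx Sig)^T = invmx Sig by rewrite trmx_inv SigT.
rewrite -sqnormM_polarization // mutB /Eplus /Eminus.
have shift (v : 'cV[R]_d) : xm - mut t dt sig x v
    = (xm - mut t dt sig x vold) - (mut t dt sig x v - mut t dt sig x vold).
  by rewrite opprB addrA subrK.
rewrite !(shift (vplus _ _ _)) !(shift (vminus _ _ _)) !mutB /vplus /vminus.
by rewrite !(addrC vold) !addrK scalerN opprK.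
Qed.

Lemma zt_affine (r : R) (vth : 'cV[R]_d) :
  zt t dt sig beta r Sig x xm vold vth
  = - (2 * (2 * r - 1) * Bt t dt sig * beta)
    * inner (invmx Sig *m (xm - mut t dt sig x vold)) (vth - vold).
Proof.
rewrite /zt Eplus_sub_Eminus mutB /vplus (addrC vold) addrK scalerA innerZr.
by field.
Qed.

End one_step_mean.

Section directional_derivative.
Context {R : realType}.

Lemma derive_along_line (V W : normedModType R) (f : V -> W) (x u : V) :
  'D_u f x = 'D_1 (fun h : R => f (h *: u + x)) 0.
Proof.
rewrite /derive; set g1 := fun h => h^-1 *: _; set g2 := fun h => h^-1 *: _.
suff -> : g1 = g2 by [].
by apply/funext => h; rewrite /g1 /g2 /= addr0 scale0r add0r [_%:A]mulr1.
Qed.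

Lemma is_derive_comp_scalar {V : normedModType R} {F : R -> R} {g : V -> R}
    {x u : V} {dF dg : R} :
  is_derive x u g dg -> is_derive (g x) 1 F dF -> is_derive x u (F \o g) (dF * dg).
Proof.
move=> [gx <-] Fgx.
pose gu h := g (h *: u + x).
have gu0 : is_derive (0 : R) (1 : R) gu ('D_u g x).
  apply: (@DeriveDef _ _ _ _ _ gu); first exact: (derivable1P _ _ _).1 gx.
  by rewrite [RHS]derive_along_line.
have gu_at0 : gu 0 = g x by rewrite /gu scale0r add0r.
rewrite -gu_at0 in Fgx.
have [Fgu_der Fgu_val] := is_derive1_comp Fgx gu0.
apply: (@DeriveDef _ _ _ _ _ (F \o g)); first exact: (derivable1P _ _ _).2 Fgu_der.
rewrite [LHS]derive_along_line; exact: Fgu_val.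
Qed.

Lemma is_derive_softplus (z : R) : is_derive z 1 (@softplus R) (sigmoid z).
Proof.
have expz_gt0 : 0 < 1 + expR z by rewrite addr_gt0 ?expR_gt0.
have exp_der : is_derive z 1 (fun y : R => 1 + expR y) (0 + expR z).
  exact: is_deriveD.
have := @is_derive1_comp _ (@ln R) _ z _ _ (is_derive1_ln expz_gt0) exp_der.
move=> der; apply: (is_derive_eq der); rewrite add0r /sigmoid expRN.
have expz_neq0 : expR z != 0 by rewrite gt_eqF ?expR_gt0.
by field; rewrite expz_neq0 addrC gt_eqF.
Qed.

End directional_derivative.

Section gradient.
Context {R : realType} {p d : nat}.
Implicit Types (v : 'cV[R]_p -> 'cV[R]_d) (w : 'cV[R]_d) (th u : 'cV[R]_p).

Lemma is_derive_inner_affine v w (k : R) th u : derivable v th u ->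
  is_derive th u (fun th => inner w (v th) + k) (inner w ('D_u v th)).
Proof.
move=> dv.
have coord i : is_derive th u (fun th => v th i 0) ('D_u v th i 0).
  rewrite derive_mx // mxE; apply: derivableP.
  exact: (derivable_mxP _ _ _).1 dv i 0.
have : is_derive th u (\sum_i (fun th => w i 0 * v th i 0) + cst k)
                      (\sum_i w i 0 * 'D_u v th i 0 + 0).
  apply: is_deriveD; apply: is_derive_sum => i; exact: is_deriveZ.
rewrite addr0 -inner_sum => der.
have -> : (fun th => inner w (v th) + k) = \sum_i (fun th => w i 0 * v th i 0) + cst k.
  by apply/funext => th'; rewrite /= fct_sumE inner_sum.
exact: der.
Qed.

Lemma gradR_comp_inner_affine {F : R -> R} {dF : R} {v w} {k : R} {th} :
  differentiable v th -> is_derive (inner w (v th) + k) 1 F dF ->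
  gradR (fun th => F (inner w (v th) + k)) th = dF *: ((jacobian_col v th)^T *m w).
Proof.
move=> dv dF_at; apply/matrixP => i j; rewrite ord1 !mxE.
have der := is_derive_comp_scalar
  (is_derive_inner_affine v w k th (delta_mx i 0) (diff_derivable dv)) dF_at.
rewrite derive_val inner_sum; congr (_ * _); apply: eq_bigr => l _.
by rewrite !mxE mulrC.
Qed.
End gradient.

Lemma neg_gradR_losst (R : realType) (d p : nat) (t dt sig beta r : R)
    (Sig : 'M[R]_d) (x xm vold : 'cV[R]_d) (v : 'cV[R]_p -> 'cV[R]_d) th :
  Sig^T = Sig -> differentiable v th ->
  - gradR (losst t dt sig beta r Sig x xm vold v) th
  = (2 * beta * sigmoid (zt t dt sig beta r Sig x xm vold (v th)) * (2 * r - 1))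
    *: ((jacobian_col v th)^T *m
        (Bt t dt sig *: (invmx Sig *m (xm - mut t dt sig x vold)))).
Proof.
move=> SigT dv.
set w := invmx Sig *m _; set c := - (2 * (2 * r - 1) * Bt t dt sig * beta).
have zt_inner vth : zt t dt sig beta r Sig x xm vold vth
    = inner (c *: w) vth + - (c * inner w vold).
  by rewrite zt_affine // innerBr innerZl mulrBr.
have -> : losst t dt sig beta r Sig x xm vold v
    = fun th => softplus (inner (c *: w) (v th) + - (c * inner w vold)).
  by apply/funext => th'; rewrite /losst zt_inner.
rewrite (gradR_comp_inner_affine dv (is_derive_softplus _)) -zt_inner.
rewrite -!scalemxAr !scalerA -scaleNr; congr (_ *: _).
by rewrite /c; ring.
Qed.

Section Rintegral_facts.
Context {dT : measure_display} {T : measurableType dT} {R : realType}.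
Variable mu : {measure set T -> \bar R}.

Lemma Rintegral_sum (I : Type) (s : seq I) (F : I -> T -> R) :
  (forall i, mu.-integrable setT (EFin \o F i)) ->
  \int[mu]_w (\sum_(i <- s) F i w) = \sum_(i <- s) \int[mu]_w F i w.
Proof.
move=> intF; elim: s => [|i s IHs].
  by under eq_Rintegral do rewrite big_nil; rewrite Rintegral_cst // mul0r big_nil.
under eq_Rintegral do rewrite big_cons.
rewrite big_cons RintegralD ?IHs //.
have -> : EFin \o (fun w => \sum_(j <- s) F j w) = fun w => \sum_(j <- s) (F j w)%:E.
  by apply/funext => w /=; rewrite sumEFin.
by apply: (integrable_sum measurableT) => j _; exact: intF.
Qed.

Lemma Rintegral_setC (A : set T) (f : T -> R) : measurable A ->
  mu.-integrable setT (EFin \o f) ->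
  \int[mu]_(w in ~` A) f w = \int[mu]_w f w - \int[mu]_(w in A) f w.
Proof.
move=> mA intf; rewrite -[in \int[mu]_w _](setUCr A) Rintegral_setU //.
- by rewrite addrAC subrr add0r.
- exact: measurableC.
- by rewrite setUCr.
- by rewrite disj_set2E setICr.
Qed.

Lemma integrable_patch (A : set T) (g : T -> R) : measurable A ->
  mu.-integrable setT (EFin \o g) -> mu.-integrable setT (EFin \o g \_ A).
Proof.
move=> mA intg; rewrite -restrict_EFin.
exact/(integrable_mkcond _ mA)/(integrableS _ _ _ intg).
Qed.

Variable o : T -> bool.
Hypothesis mo : measurable [set w | o w].

Lemma sign_mul_patch (g : T -> R) w :
  (2 * (o w)%:R - 1) * g w = 2 * (g \_ [set w | o w]) w - g w.
Proof.
rewrite /patch; have -> : (w \in [set w | o w]) = o w.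
  by apply/idP/idP => [/set_mem|/mem_set].
have point0 : point = 0 :> R by [].
by case: (o w) => /=; rewrite ?point0; ring.
Qed.

Lemma integrable_sign_mul (g : T -> R) : mu.-integrable setT (EFin \o g) ->
  mu.-integrable setT (EFin \o (fun w => (2 * (o w)%:R - 1) * g w)).
Proof.
move=> intg; have intgA := integrable_patch _ _ mo intg.
have := integrableB measurableT (integrableZl measurableT 2 intgA) intg.
by apply: eq_integrable => // w _ /=; rewrite sign_mul_patch EFinB EFinM.
Qed.

Lemma Rintegral_sign_mul (g : T -> R) : mu.-integrable setT (EFin \o g) ->
  \int[mu]_w ((2 * (o w)%:R - 1) * g w)
  = 2 * \int[mu]_(w in [set w | o w]) g w - \int[mu]_w g w.
Proof.
move=> intg; have intgA := integrable_patch _ _ mo intg.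
under eq_Rintegral do rewrite sign_mul_patch.
rewrite RintegralB // ?RintegralZl // -?Rintegral_mkcond //.
have := integrableZl measurableT 2 intgA.
by apply: eq_integrable => // w _ /=; rewrite EFinM.
Qed.

End Rintegral_facts.

Section conditional_means.
Context {dT : measure_display} {T : measurableType dT} {R : realType}.
Variable P : probability T R.

Lemma Evec_mulmx (d q : nat) (G : 'M[R]_(q, d)) (Y : T -> 'cV[R]_d) :
  (forall i, P.-integrable setT (fun w => (Y w i 0)%:E)) ->
  Evec P (fun w => G *m Y w) = G *m Evec P Y.
Proof.
move=> intY; apply/matrixP => k j; rewrite ord1 !mxE.
have -> : fine (\int[P]_w ((G *m Y w) k 0)%:E)
          = \int[P]_w (\sum_i G k i * Y w i 0).
  by congr fine; apply: eq_integral => w _; rewrite !mxE.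
rewrite Rintegral_sum; last first.
  move=> i; have := integrableZl measurableT (G k i) (intY i).
  by apply: eq_integrable => // w _ /=; rewrite EFinM.
by apply: eq_bigr => i _; rewrite RintegralZl ?mxE //; exact: intY.
Qed.

Variable o : T -> bool.
Hypothesis mo : measurable [set w | o w].
Let p := fine (P [set w | o w]).
Hypothesis p_bounds : 0 < p < 1.

Lemma Econd_sub_EcondC (d : nat) (X : T -> 'cV[R]_d) (i : 'I_d) :
  P.-integrable setT (fun w => (X w i 0)%:E) ->
  p * (1 - p) * (Econd P X [set w | o w] - Econd P X [set w | ~~ o w]) i 0
  = \int[P]_(w in [set w | o w]) X w i 0 - p * Evec P X i 0.
Proof.
move=> intX; have /andP[p_gt0 p_lt1] := p_bounds.
have notoE : [set w | ~~ o w] = ~` [set w | o w].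
  by apply/seteqP; split => w /=; move/negP.
have PnotoE : fine (P [set w | ~~ o w]) = 1 - p.
  by rewrite notoE probability_setC // -[P _]fineK ?fin_num_measure.
rewrite !mxE PnotoE -!/(Rintegral P _ _) notoE Rintegral_setC // -/(Rintegral P _ _).
have p_neq0 : p != 0 by rewrite gt_eqF.
have q_neq0 : 1 - p != 0 by rewrite subr_eq0 eq_sym lt_eqF.
by rewrite -/p; field; rewrite p_neq0 q_neq0.
Qed.

Lemma integrable_subr_cst (f : T -> R) (c : R) :
  P.-integrable setT (EFin \o f) -> P.-integrable setT (EFin \o (fun w => f w - c)).
Proof.
move=> intf.
have := integrableB measurableT intf (finite_measure_integrable_cst P c measurableT).
by apply: eq_integrable => // w _ /=; rewrite EFinB.
Qed.

Lemma Evec_sign_centered (d : nat) (X : T -> 'cV[R]_d) :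
  (forall i, P.-integrable setT (fun w => (X w i 0)%:E)) ->
  Evec P (fun w => (2 * (o w)%:R - 1) *: (X w - Evec P X))
  = (2 * (p * (1 - p))) *: (Econd P X [set w | o w] - Econd P X [set w | ~~ o w]).
Proof.
move=> intX; apply/matrixP => i j; rewrite ord1 [RHS]mxE -mulrA Econd_sub_EcondC //.
set m : R := Evec P X i 0.
have -> : Evec P (fun w => (2 * (o w)%:R - 1) *: (X w - Evec P X)) i 0
          = \int[P]_w ((2 * (o w)%:R - 1) * (X w i 0 - m)).
  by rewrite mxE; congr fine; apply: eq_integral => w _; rewrite 3!mxE.
rewrite Rintegral_sign_mul //; last first.
  exact: (integrable_subr_cst (fun w => X w i 0) m (intX i)).
have intXA : P.-integrable [set w | o w] (EFin \o (fun w => X w i 0)).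
  exact: integrableS (intX i).
have int_cst D : measurable D -> P.-integrable D (fun=> m%:E).
  by move=> mD; have := finite_measure_integrable_cst P m mD.
have mE : \int[P]_w X w i 0 = m by rewrite /m mxE.
rewrite !RintegralB // ?int_cst //; last by have := intX i.
rewrite (Rintegral_cst _ mo) (Rintegral_cst _ measurableT) mE -/p.
rewrite (_ : fine _ = 1); last exact: (congr1 fine (probability_setT P)).
by rewrite mulr1 subrr subr0 [m * p]mulrC.
Qed.

Lemma Evec_sign_update_parallel (d q : nat) (J : 'M[R]_(d, q)) (B c : R)
    (M : 'M[R]_d) (X : T -> 'cV[R]_d) :
  0 <= c -> (forall i, P.-integrable setT (fun w => (X w i 0)%:E)) ->
  exists2 lam : R, 0 <= lam &
    Evec P (fun w => (c * (2 * (o w)%:R - 1)) *: (J^T *m (B *: (M *m (X w - Evec P X)))))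
    = lam *: (J^T *m (B *: (M *m (Econd P X [set w | o w] - Econd P X [set w | ~~ o w])))).
Proof.
move=> c_ge0 intX; have /andP[p_gt0 p_lt1] := p_bounds.
exists (c * (2 * (p * (1 - p)))); first by rewrite !mulr_ge0 // ?subr_ge0 ltW.
set G := c *: (J^T *m (B *: M)).
have factor k (Y : 'cV[R]_d) : (c * k) *: (J^T *m (B *: (M *m Y))) = G *m (k *: Y).
  by rewrite /G -!scalemxAl -mulmxA -!scalemxAl -!scalemxAr !scalerA [B * k]mulrC mulrA.
rewrite (eq_fun (fun w => factor _ _)) factor Evec_mulmx ?Evec_sign_centered // => i.
have := integrable_sign_mul P o mo _
  (integrable_subr_cst (fun w => X w i 0) (Evec P X i 0) (intX i)).
by apply: eq_integrable => // w _ /=; rewrite 3![in RHS]mxE.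
Qed.

End conditional_means.

Theorem theorem4p4 (R : realType) (d p : nat) (t dt sig beta : R)
  (x : 'cV[R]_d) (Sig : 'M[R]_d) (vold : 'cV[R]_d)
  (v : 'cV[R]_p -> 'cV[R]_d) :
  0 < t <= 1 -> 0 < dt -> 0 < sig -> 0 < beta ->
  symmetric_pd Sig ->
  (forall th, differentiable v th) ->
  (* (a) *)
  (forall (th : 'cV[R]_p) (xm : 'cV[R]_d),
     Eplus t dt sig beta Sig x xm vold (v th)
     - Eminus t dt sig beta Sig x xm vold (v th)
     = - 4 * inner (invmx Sig *m (xm - mut t dt sig x vold))
                   (mut t dt sig x (vplus beta vold (v th)) - mut t dt sig x vold))
  /\
  (* (b) *)
  (forall (th : 'cV[R]_p) (xm : 'cV[R]_d) (r : R), 0 <= r <= 1 ->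
     - gradR (losst t dt sig beta r Sig x xm vold v) th
     = (2 * beta * sigmoid (zt t dt sig beta r Sig x xm vold (v th)) * (2 * r - 1))
       *: ((jacobian_col v th)^T *m
           (Bt t dt sig *: (invmx Sig *m (xm - mut t dt sig x vold)))))
  /\
  (* (c) small-update regime: sigma(z_t) frozen to a constant s > 0 *)
  (forall (dT : measure_display) (T : measurableType dT) (P : probability T R)
          (X : T -> 'cV[R]_d) (o : T -> bool) (th : 'cV[R]_p) (s : R),
     measurable [set w | o w] ->
     (forall i, P.-integrable setT (fun w => (X w i 0)%:E)) ->
     0 < fine (P [set w | o w]) < 1 ->
     mut t dt sig x vold = Evec P X ->
     0 < s ->
     exists2 lam : R, 0 <= lam &
       Evec P (fun w =>
         (2 * beta * s * (2 * (o w)%:R - 1))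
         *: ((jacobian_col v th)^T *m
             (Bt t dt sig *: (invmx Sig *m (X w - mut t dt sig x vold)))))
       = lam *: ((jacobian_col v th)^T *m
                 (Bt t dt sig *: (invmx Sig *m
                   (Econd P X [set w | o w] - Econd P X [set w | ~~ o w]))))).
Proof.
move=> _ _ _ beta_gt0 [SigT _] dv; split; [|split].
- by move=> th xm; exact: Eplus_sub_Eminus.
- by move=> th xm r _; exact: neg_gradR_losst.
- move=> dT T P X o th s mo intX p_bounds -> s_gt0.
  apply: Evec_sign_update_parallel => //.
  by rewrite !mulr_ge0 // ltW.
Qed.
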